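(* Let $A_1A_2A_3A_4$ be a (non-degenerate) tetrahedron in $\mathbb{R}^3$ with $A_1A_4+A_2A_3>A_1A_2+A_3A_4$, and let $B_1,B_2,B_3,B_4,B_{12},B_{34}$ be positive real numbers. Put $B_{ST}=\frac{B_{12}+B_{34}}{2}$ and $$f(O_{12},O_{34})=B_1|A_1O_{12}|+B_2|A_2O_{12}|+B_3|A_3O_{34}|+B_4|A_4O_{34}|+B_{ST}\,|O_{12}O_{34}|,\qquad O_{12},O_{34}\in\mathbb{R}^3 .$$ Suppose $(O_{12},O_{34})$ is a minimizer of $f$ such that $O_{12}$ and $O_{34}$ are interior points of the tetrahedron with $O_{12}\neq O_{34}$. Let $\alpha_{12}=\angle A_1O_{12}A_2$, $\alpha_1=\angle A_2O_{12}O_{34}$, $\alpha_{34}=\angle A_3O_{34}A_4$, $\alpha_4=\angle A_3O_{34}O_{12}$. Then $$\cos\alpha_{12}=\frac{B_{ST}^2-B_1^2-B_2^2}{2B_1B_2},\quad \cos\alpha_1=\frac{B_1^2-B_2^2-B_{ST}^2}{2B_2B_{ST}},$$ $$\cos\alpha_{34}=\frac{B_{ST}^2-B_3^2-B_4^2}{2B_3B_4},\quad \cos\alpha_4=\frac{B_4^2-B_3^2-B_{ST}^2}{2B_3B_{ST}}.$$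
   Context: $|XY|$ denotes Euclidean distance and $\angle XYZ\in[0,\pi]$ the angle at $Y$. The problem of minimizing $f$ is the weighted Steiner problem for the four points (with weights $B_i$ at $A_i$ and weights $B_{12},B_{34}$ at the two interior nodes $O_{12},O_{34}$, the nodes being the weighted Fermat–Torricelli points). *)

From Stdlib Require Import Reals.
Open Scope R_scope.

Record pt := Pt { px : R; py : R; pz : R }.

Definition vsub (a b : pt) : pt := Pt (px a - px b) (py a - py b) (pz a - pz b).
Definition dot (u v : pt) : R := px u * px v + py u * py v + pz u * pz v.
Definition norm (u : pt) : R := sqrt (dot u u).

Definition edist (x y : pt) : R := norm (vsub x y).

(* angle XYZ in [0, pi] at Y (for X, Z distinct from Y) *)
Definition angle (x y z : pt) : R :=
  acos (dot (vsub x y) (vsub z y) / (edist x y * edist z y)).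

Definition det3 (u v w : pt) : R :=
  px u * (py v * pz w - pz v * py w)
  - py u * (px v * pz w - pz v * px w)
  + pz u * (px v * py w - py v * px w).

Definition nondegenerate_tetra (a1 a2 a3 a4 : pt) : Prop :=
  det3 (vsub a2 a1) (vsub a3 a1) (vsub a4 a1) <> 0.

Definition in_tetra_interior (a1 a2 a3 a4 p : pt) : Prop :=
  exists l1 l2 l3 l4 : R,
    0 < l1 /\ 0 < l2 /\ 0 < l3 /\ 0 < l4 /\ l1 + l2 + l3 + l4 = 1 /\
    px p = l1 * px a1 + l2 * px a2 + l3 * px a3 + l4 * px a4 /\
    py p = l1 * py a1 + l2 * py a2 + l3 * py a3 + l4 * py a4 /\
    pz p = l1 * pz a1 + l2 * pz a2 + l3 * pz a3 + l4 * pz a4.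

Definition fobj (a1 a2 a3 a4 : pt) (b1 b2 b3 b4 bst : R) (o12 o34 : pt) : R :=
  b1 * edist a1 o12 + b2 * edist a2 o12 + b3 * edist a3 o34 + b4 * edist a4 o34
  + bst * edist o12 o34.

(** At a minimizer, each interior node is a point where, the other node being
    fixed, a weighted sum of three distances is minimal.  As the node differs
    from the three points, Fermat's rule makes the weighted sum of the three
    unit vectors pointing to them vanish; testing this against each unit
    vector gives three linear relations between the pairwise cosines, which
    solve to the law-of-cosines values. *)

From Pilot Require Import Defs.
From Stdlib Require Import Reals Lra Psatz.
From Coquelicot Require Import Coquelicot.
Open Scope R_scope.

Definition vscale (k : R) (u : pt) : pt := Pt (k * px u) (k * py u) (k * pz u).

Definition shift (o : pt) (t : R) (v : pt) : pt :=
  Pt (px o + t * px v) (py o + t * py v) (pz o + t * pz v).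

Definition unit_dir (a o : pt) : pt := vscale (/ edist a o) (vsub a o).

Lemma shift0 o v : shift o 0 v = o.
Proof. destruct o; unfold shift; simpl; f_equal; ring. Qed.

Lemma dot_comm u v : dot u v = dot v u.
Proof. unfold dot; ring. Qed.

Lemma dot_vscale_l k u v : dot (vscale k u) v = k * dot u v.
Proof. unfold dot, vscale; simpl; ring. Qed.

Lemma dot_vscale_r k u v : dot u (vscale k v) = k * dot u v.
Proof. unfold dot, vscale; simpl; ring. Qed.

Lemma dot_vsub_self_pos a o : a <> o -> 0 < dot (vsub a o) (vsub a o).
Proof.
  intro Hao; destruct a as [a1 a2 a3], o as [o1 o2 o3]; unfold dot, vsub; simpl.
  destruct (Req_dec a1 o1), (Req_dec a2 o2), (Req_dec a3 o3);
    try (subst; now elim Hao); nra.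
Qed.

Lemma edist_pos a o : a <> o -> 0 < edist a o.
Proof. intro Hao; apply sqrt_lt_R0, dot_vsub_self_pos, Hao. Qed.

Lemma dot_self_nonneg u : 0 <= dot u u.
Proof.
  unfold dot; repeat apply Rplus_le_le_0_compat; apply Rle_0_sqr.
Qed.

Lemma edist_sqr a o : edist a o * edist a o = dot (vsub a o) (vsub a o).
Proof. apply sqrt_sqrt, dot_self_nonneg. Qed.

Lemma edist_sym x y : edist x y = edist y x.
Proof. unfold edist, Defs.norm, dot, vsub; simpl; f_equal; ring. Qed.

Lemma angle_sym x y z : angle x y z = angle z y x.
Proof. unfold angle; f_equal; unfold dot; simpl; f_equal; ring. Qed.

Lemma dot_unit_dir_self a o : a <> o -> dot (unit_dir a o) (unit_dir a o) = 1.
Proof.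
  intro Hao; unfold unit_dir.
  rewrite dot_vscale_l, dot_vscale_r, <- edist_sqr.
  field; apply Rgt_not_eq, edist_pos, Hao.
Qed.

Lemma dot_unit_bound u v :
  dot u u = 1 -> dot v v = 1 -> -1 <= dot u v <= 1.
Proof.
  destruct u as [x y z], v as [a b c]; unfold dot; simpl; intros Hu Hv.
  pose proof (Rle_0_sqr (x - a)); pose proof (Rle_0_sqr (y - b));
  pose proof (Rle_0_sqr (z - c)); pose proof (Rle_0_sqr (x + a));
  pose proof (Rle_0_sqr (y + b)); pose proof (Rle_0_sqr (z + c)).
  unfold Rsqr in *; split; nra.
Qed.

Lemma cos_angle a o c : a <> o -> c <> o ->
  cos (angle a o c) = dot (unit_dir a o) (unit_dir c o).
Proof.
  intros Hao Hco.
  assert (Hcos : dot (unit_dir a o) (unit_dir c o)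
                 = dot (vsub a o) (vsub c o) / (edist a o * edist c o)).
  { unfold unit_dir; rewrite dot_vscale_l, dot_vscale_r.
    field; split; apply Rgt_not_eq, edist_pos; assumption. }
  unfold angle; rewrite <- Hcos.
  apply cos_acos, dot_unit_bound; apply dot_unit_dir_self; assumption.
Qed.

Lemma is_derive_edist_shift a o v : a <> o ->
  is_derive (fun t => edist a (shift o t v)) 0 (- dot (unit_dir a o) v).
Proof.
  intro Hao; pose proof (dot_vsub_self_pos a o Hao) as Hpos.
  pose proof (edist_pos a o Hao) as Hd.
  unfold unit_dir; rewrite dot_vscale_l.
  destruct a as [a1 a2 a3], o as [o1 o2 o3], v as [v1 v2 v3].
  unfold edist, Defs.norm, dot, vsub, shift in *; simpl in *.
  auto_derive; rewrite !Rmult_0_l, !Rplus_0_r.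
  - lra.
  - unfold Rminus in *; field; lra.
Qed.

Lemma is_derive_min_0 (g : R -> R) l :
  is_derive g 0 l -> (forall t, g 0 <= g t) -> l = 0.
Proof.
  intros Hg Hmin; apply is_derive_Reals in Hg.
  exact (deriv_minimum g (-1) 1 0 (exist _ l Hg) ltac:(lra) ltac:(lra)
           (fun t _ _ => Hmin t)).
Qed.

Lemma fermat_three_points (a b c o : pt) (b1 b2 b3 : R) :
  a <> o -> b <> o -> c <> o ->
  (forall p, b1 * edist a o + b2 * edist b o + b3 * edist c o <=
             b1 * edist a p + b2 * edist b p + b3 * edist c p) ->
  forall v, b1 * dot (unit_dir a o) v + b2 * dot (unit_dir b o) v
            + b3 * dot (unit_dir c o) v = 0.
Proof.
  intros Hao Hbo Hco Hmin v.
  enough (H : b1 * - dot (unit_dir a o) v + b2 * - dot (unit_dir b o) v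
              + b3 * - dot (unit_dir c o) v = 0) by lra.
  apply (is_derive_min_0 (fun t => b1 * edist a (shift o t v)
           + b2 * edist b (shift o t v) + b3 * edist c (shift o t v))).
  - apply (is_derive_plus (fun t => b1 * edist a (shift o t v) + b2 * edist b (shift o t v))
                          (fun t => b3 * edist c (shift o t v))).
    + apply (is_derive_plus (fun t => b1 * edist a (shift o t v))
                            (fun t => b2 * edist b (shift o t v)));
        apply is_derive_scal, is_derive_edist_shift; assumption.
    + apply is_derive_scal, is_derive_edist_shift; assumption.
  - intro p; rewrite shift0; apply Hmin.
Qed.

Lemma weighted_cosines (b1 b2 b3 c12 c13 c23 : R) : 0 < b1 -> 0 < b2 ->
  b1 + b2 * c12 + b3 * c13 = 0 ->
  b1 * c12 + b2 + b3 * c23 = 0 ->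
  b1 * c13 + b2 * c23 + b3 = 0 ->
  c12 = (b3 ^ 2 - b1 ^ 2 - b2 ^ 2) / (2 * b1 * b2).
Proof.
  intros Hb1 Hb2 E1 E2 E3.
  assert (E : 2 * b1 * b2 * c12 = b3 ^ 2 - b1 ^ 2 - b2 ^ 2).
  { transitivity (b1 * (b1 + b2 * c12 + b3 * c13) + b2 * (b1 * c12 + b2 + b3 * c23)
                  - b3 * (b1 * c13 + b2 * c23 + b3) + b3 ^ 2 - b1 ^ 2 - b2 ^ 2); [ring|].
    rewrite E1, E2, E3; ring. }
  rewrite <- E; field; lra.
Qed.

Lemma three_point_minimizer_cos (a b c o : pt) (b1 b2 b3 : R) :
  0 < b1 -> 0 < b2 -> 0 < b3 -> a <> o -> b <> o -> c <> o ->
  (forall p, b1 * edist a o + b2 * edist b o + b3 * edist c o <=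
             b1 * edist a p + b2 * edist b p + b3 * edist c p) ->
  cos (angle a o b) = (b3 ^ 2 - b1 ^ 2 - b2 ^ 2) / (2 * b1 * b2) /\
  cos (angle b o c) = (b1 ^ 2 - b2 ^ 2 - b3 ^ 2) / (2 * b2 * b3).
Proof.
  intros Hb1 Hb2 Hb3 Hao Hbo Hco Hmin.
  pose proof (fermat_three_points a b c o b1 b2 b3 Hao Hbo Hco Hmin) as Hstat.
  rewrite !cos_angle by assumption.
  pose proof (Hstat (unit_dir a o)) as Ea; pose proof (Hstat (unit_dir b o)) as Eb;
    pose proof (Hstat (unit_dir c o)) as Ec.
  rewrite (dot_unit_dir_self a o Hao), (dot_comm (unit_dir b o)), (dot_comm (unit_dir c o)) in Ea.
  rewrite (dot_unit_dir_self b o Hbo), (dot_comm (unit_dir c o)) in Eb.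
  rewrite (dot_unit_dir_self c o Hco) in Ec.
  split.
  - apply (weighted_cosines b1 b2 b3 _ (dot (unit_dir a o) (unit_dir c o))
             (dot (unit_dir b o) (unit_dir c o))); lra.
  - apply (weighted_cosines b2 b3 b1 _ (dot (unit_dir a o) (unit_dir b o))
             (dot (unit_dir a o) (unit_dir c o))); lra.
Qed.

Lemma det3_lincomb_eq0 (u v w : pt) (k1 k2 k3 : R) :
  det3 u v w <> 0 ->
  k1 * px u + k2 * px v + k3 * px w = 0 ->
  k1 * py u + k2 * py v + k3 * py w = 0 ->
  k1 * pz u + k2 * pz v + k3 * pz w = 0 ->
  k1 = 0 /\ k2 = 0 /\ k3 = 0.
Proof.
  intros Hdet Hx Hy Hz.
  set (s := Pt (k1 * px u + k2 * px v + k3 * px w) (k1 * py u + k2 * py v + k3 * py w)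
               (k1 * pz u + k2 * pz v + k3 * pz w)).
  assert (Hs : s = Pt 0 0 0) by (unfold s; rewrite Hx, Hy, Hz; reflexivity).
  (* Cramer's rule: multilinearity and alternation of det3 *)
  assert (C1 : k1 * det3 u v w = 0).
  { transitivity (det3 s v w); [unfold s, det3; simpl; ring|].
    rewrite Hs; unfold det3; simpl; ring. }
  assert (C2 : k2 * det3 u v w = 0).
  { transitivity (det3 u s w); [unfold s, det3; simpl; ring|].
    rewrite Hs; unfold det3; simpl; ring. }
  assert (C3 : k3 * det3 u v w = 0).
  { transitivity (det3 u v s); [unfold s, det3; simpl; ring|].
    rewrite Hs; unfold det3; simpl; ring. }
  repeat split; eapply Rmult_eq_reg_r; try eassumption; lra.
Qed.

Lemma interior_neq_vertices (a1 a2 a3 a4 p : pt) :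
  nondegenerate_tetra a1 a2 a3 a4 -> in_tetra_interior a1 a2 a3 a4 p ->
  a1 <> p /\ a2 <> p /\ a3 <> p /\ a4 <> p.
Proof.
  intros Hdeg [l1 [l2 [l3 [l4 [H1 [H2 [H3 [H4 [Hsum [Hx [Hy Hz]]]]]]]]]]].
  assert (Hl1 : l1 = 1 - l2 - l3 - l4) by lra; subst l1.
  repeat split; intros <-; simpl in *.
  - destruct (det3_lincomb_eq0 _ _ _ l2 l3 l4 Hdeg) as (? & ? & ?); simpl; lra.
  - destruct (det3_lincomb_eq0 _ _ _ (l2 - 1) l3 l4 Hdeg) as (? & ? & ?); simpl; lra.
  - destruct (det3_lincomb_eq0 _ _ _ l2 (l3 - 1) l4 Hdeg) as (? & ? & ?); simpl; lra.
  - destruct (det3_lincomb_eq0 _ _ _ l2 l3 (l4 - 1) Hdeg) as (? & ? & ?); simpl; lra.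
Qed.

Theorem theorem3 (A1 A2 A3 A4 : pt) (B1 B2 B3 B4 B12 B34 : R) (O12 O34 : pt) :
  nondegenerate_tetra A1 A2 A3 A4 ->
  edist A1 A4 + edist A2 A3 > edist A1 A2 + edist A3 A4 ->
  0 < B1 -> 0 < B2 -> 0 < B3 -> 0 < B4 -> 0 < B12 -> 0 < B34 ->
  let BST := (B12 + B34) / 2 in
  (forall P Q : pt,
     fobj A1 A2 A3 A4 B1 B2 B3 B4 BST O12 O34 <= fobj A1 A2 A3 A4 B1 B2 B3 B4 BST P Q) ->
  in_tetra_interior A1 A2 A3 A4 O12 ->
  in_tetra_interior A1 A2 A3 A4 O34 ->
  O12 <> O34 ->
  cos (angle A1 O12 A2) = (BST ^ 2 - B1 ^ 2 - B2 ^ 2) / (2 * B1 * B2) /\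
  cos (angle A2 O12 O34) = (B1 ^ 2 - B2 ^ 2 - BST ^ 2) / (2 * B2 * BST) /\
  cos (angle A3 O34 A4) = (BST ^ 2 - B3 ^ 2 - B4 ^ 2) / (2 * B3 * B4) /\
  cos (angle A3 O34 O12) = (B4 ^ 2 - B3 ^ 2 - BST ^ 2) / (2 * B3 * BST).
Proof.
  (* The length condition only serves, in the paper, to make the minimizer have
     this topology. *)
  intros Hdeg _ HB1 HB2 HB3 HB4 HB12 HB34 BST Hmin I12 I34 Hneq.
  assert (HBST : 0 < BST) by (unfold BST; lra).
  destruct (interior_neq_vertices _ _ _ _ _ Hdeg I12) as (H1 & H2 & _ & _).
  destruct (interior_neq_vertices _ _ _ _ _ Hdeg I34) as (_ & _ & H3 & H4).
  destruct (three_point_minimizer_cos A1 A2 O34 O12 B1 B2 BST)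
    as [C12 C1]; auto.
  { intro p; specialize (Hmin p O34); unfold fobj in Hmin.
    rewrite (edist_sym O12 O34), (edist_sym p O34) in Hmin; lra. }
  destruct (three_point_minimizer_cos A4 A3 O12 O34 B4 B3 BST)
    as [C34 C4]; auto.
  { intro p; specialize (Hmin O12 p); unfold fobj in Hmin; lra. }
  rewrite angle_sym in C34.
  repeat split; [exact C12 | exact C1 | | exact C4].
  rewrite C34; f_equal; ring.
Qed.
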